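(* Let $p$ be a prime, $d\ge1$, and $w:\mathbb{Z}_p^d\to[0,\infty)$, not identically zero, with $\operatorname{supp}(w)=E$. If some $B\subseteq\mathbb{Z}_p^d$ is a spectrum for $L^2(w)$, then $w=c\,1_E$ for some constant $c>0$.
   Context: $\mathbb{Z}_p^d$ is the $d$-dimensional vector space over the field $\mathbb{Z}_p$, $x\cdot b=\sum_i x_ib_i$, $\chi(t)=e^{2\pi i t/p}$. $1_E$ is the indicator of $E$. For $w:\mathbb{Z}_p^d\to[0,\infty)$, $\operatorname{supp}(w)=\{x:w(x)>0\}$ and $L^2(w)$ is the space of functions on $\operatorname{supp}(w)$ with inner product $\langle f,h\rangle_w=\sum_{x}f(x)\overline{h(x)}w(x)$. A set $B\subseteq\mathbb{Z}_p^d$ is a spectrum for $L^2(w)$ if the functions $\chi_b(x)=\chi(x\cdot b)$, $b\in B$, form an orthogonal basis of $L^2(w)$: $\sum_x\chi(x\cdot(b-b'))w(x)=0$ for all distinct $b,b'\in B$, and every function on $\operatorname{supp}(w)$ is a linear combination of the $\chi_b$ restricted to $\operatorname{supp}(w)$. *)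

From HB Require Import structures.
From mathcomp Require Import all_boot all_order all_algebra all_field.
Set Implicit Arguments. Unset Strict Implicit. Unset Printing Implicit Defensive.
Import Order.TTheory GRing.Theory Num.Theory.
Local Open Scope ring_scope.

Definition dotp (p d : nat) (x b : 'rV['F_p]_d) : 'F_p :=
  \sum_(i < d) x ord0 i * b ord0 i.

(* chi(t) = zeta^t, where zeta is a primitive p-th root of unity in C
   (for C = complex numbers and zeta = e^{2 pi i/p} this is e^{2 pi i t/p}). *)
Definition chi (C : numClosedFieldType) (p : nat) (zeta : C) (t : 'F_p) : C :=
  zeta ^+ (t : nat).

Definition supp (C : numClosedFieldType) (p d : nat) (w : 'rV['F_p]_d -> C)
  : {set 'rV['F_p]_d} := [set x | 0 < w x].

(* B is a spectrum for L^2(w): the characters chi_b (b in B) are pairwise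
   orthogonal in L^2(w) and span all functions on supp(w). *)
Definition is_spectrum (C : numClosedFieldType) (p d : nat) (zeta : C)
  (w : 'rV['F_p]_d -> C) (B : {set 'rV['F_p]_d}) : Prop :=
  (forall b b', b \in B -> b' \in B -> b != b' ->
     \sum_(x : 'rV['F_p]_d) chi zeta (dotp x (b - b')) * w x = 0)
  /\
  (forall f : 'rV['F_p]_d -> C, exists a : 'rV['F_p]_d -> C,
     forall x, x \in supp w -> f x = \sum_(b in B) a b * chi zeta (dotp x b)).

From HB Require Import structures.
From mathcomp Require Import all_boot all_order all_algebra all_field.
Import Order.TTheory GRing.Theory Num.Theory.
Local Open Scope ring_scope.

(* Take [y] with [w y != 0] and expand the indicator of [y] on [supp w] as
   [\sum_b a_b chi_b].  Pairing with [chi_b] and using orthogonality gives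
   [a_b * m = w y * conj (chi_b y)], where [m = \sum_x w x] is the common
   squared norm of the unimodular characters.  Evaluating the expansion at [y]
   then yields [m = w y * #|B|] for every such [y], so [w] is constant on its
   support. *)

Definition wdot {C : numClosedFieldType} {T : finType} (w f g : T -> C) : C :=
  \sum_x f x * (g x)^* * w x.

Section OrthogonalExpansion.

Variables (C : numClosedFieldType) (T I : finType) (w : T -> C).

Lemma wdot_delta (y : T) (g : T -> C) :
  wdot w (fun x => (x == y)%:R) g = w y * (g y)^*.
Proof.
rewrite /wdot (bigD1 y) //= eqxx mul1r big1 ?addr0 1?mulrC //.
by move=> x /negbTE ->; rewrite !mul0r.
Qed.

Lemma wdot_expansion (phi : I -> T -> C) (B : {set I}) (a : I -> C)
    (f : T -> C) (b' : I) :
  (forall b, b \in B -> b != b' -> wdot w (phi b) (phi b') = 0) ->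
  (forall x, w x != 0 -> f x = \sum_(b in B) a b * phi b x) ->
  b' \in B -> wdot w f (phi b') = a b' * wdot w (phi b') (phi b').
Proof.
move=> orth expand Bb'.
have -> : wdot w f (phi b') = \sum_(b in B) a b * wdot w (phi b) (phi b').
  rewrite /wdot (eq_bigr (fun x => \sum_(b in B) a b * (phi b x *
      (phi b' x)^* * w x))); last first.
    move=> x _; have [->|/expand ->] := eqVneq (w x) 0.
      by rewrite mulr0 big1 // => b _; rewrite !mulr0.
    by rewrite !mulr_suml; apply: eq_bigr => b _; rewrite !mulrA.
  by rewrite exchange_big; apply: eq_bigr => b _; rewrite mulr_sumr.
rewrite (bigD1 b') //= big1 ?addr0 // => b /andP[Bb neq_bb'].
by rewrite orth ?mulr0.
Qed.

Lemma wdot_unimodular (f : T -> C) :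
  (forall x, `|f x| = 1) -> wdot w f f = \sum_x w x.
Proof.
by move=> f1; apply: eq_bigr => x _; rewrite -normCK f1 expr1n mul1r.
Qed.

Lemma orthogonal_basis_weight (phi : I -> T -> C) (B : {set I}) (y : T) :
  (forall b x, `|phi b x| = 1) ->
  (forall b b', b \in B -> b' \in B -> b != b' ->
     wdot w (phi b) (phi b') = 0) ->
  (forall f : T -> C, exists a : I -> C,
     forall x, w x != 0 -> f x = \sum_(b in B) a b * phi b x) ->
  w y != 0 -> w y * #|B|%:R = \sum_x w x.
Proof.
move=> phi1 orth span wy0.
have [a expand] := span (fun x => (x == y)%:R).
have coef b : b \in B -> a b * \sum_x w x = w y * (phi b y)^*.
  move=> Bb; rewrite -(@wdot_unimodular (phi b) (phi1 b)) -wdot_delta.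
  rewrite (@wdot_expansion phi B a _ b _ expand Bb) // => b' Bb'.
  exact: orth.
have := expand y wy0; rewrite eqxx => /(congr1 (fun t => t * \sum_x w x)).
rewrite mul1r mulr_suml => ->.
rewrite -sum1_card natr_sum mulr_sumr; apply: eq_bigr => b Bb.
by rewrite mulrAC coef // -mulrA -normCKC phi1 expr1n !mulr1.
Qed.

End OrthogonalExpansion.

Lemma norm_prim_root {C : numClosedFieldType} {n} {z : C} :
  n.-primitive_root z -> `|z| = 1.
Proof.
move=> prim_z; have n_gt0 := prim_order_gt0 prim_z.
apply/eqP; rewrite -(pexpr_eq1 (n := n)) -?lt0n //.
by rewrite -normrX prim_expr_order // normr1.
Qed.

Section Characters.

Variables (C : numClosedFieldType) (p : nat) (zeta : C).
Hypotheses (p_pr : prime p) (prim_zeta : p.-primitive_root zeta).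

Lemma chiD (s t : 'F_p) : chi zeta (s + t) = chi zeta s * chi zeta t.
Proof.
rewrite /chi -exprD -(prim_expr_mod prim_zeta (s + t)%N).
by congr (_ ^+ _); exact: (congr1 (fun n => (s + t) %% n)%N (Fp_cast p_pr)).
Qed.

Lemma norm_chi (t : 'F_p) : `|chi zeta t| = 1.
Proof. by rewrite /chi normrX (norm_prim_root prim_zeta) expr1n. Qed.

Lemma chiB (s t : 'F_p) : chi zeta (s - t) = chi zeta s * (chi zeta t)^*.
Proof.
rewrite -[s in RHS](subrK t) (chiD (s - t)) -mulrA.
by rewrite -normCK norm_chi expr1n mulr1.
Qed.

Lemma dotpB d (x b b' : 'rV['F_p]_d) : dotp x (b - b') = dotp x b - dotp x b'.
Proof. by rewrite /dotp -sumrB; apply: eq_bigr => i _; rewrite !mxE mulrBr. Qed.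

Lemma wdot_chi d (w : 'rV['F_p]_d -> C) (b b' : 'rV['F_p]_d) :
  wdot w (fun x => chi zeta (dotp x b)) (fun x => chi zeta (dotp x b')) =
  \sum_x chi zeta (dotp x (b - b')) * w x.
Proof. by apply: eq_bigr => x _; rewrite dotpB chiB. Qed.

End Characters.

Theorem lemma4p2 (C : numClosedFieldType) (p d : nat) (zeta : C)
  (hp : prime p) (hd : (1 <= d)%N) (hzeta : p.-primitive_root zeta)
  (w : 'rV['F_p]_d -> C) (E : {set 'rV['F_p]_d})
  (hw : forall x, 0 <= w x) (hw0 : exists x, w x != 0) (hE : E = supp w) :
  (exists B : {set 'rV['F_p]_d}, is_spectrum zeta w B) ->
  exists c : C, 0 < c /\ forall x, w x = c * (x \in E)%:R.
Proof.
case=> B [orth span]; have [y wy0] := hw0.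
have pos_w x : (0 < w x) = (w x != 0) by rewrite lt_def hw andbT.
have weightB x : w x != 0 -> w x * #|B|%:R = \sum_z w z.
  apply: (@orthogonal_basis_weight C _ _ w (fun b z => chi zeta (dotp z b))).
  - by move=> b z; apply: norm_chi.
  - by move=> b b' Bb Bb' neq_bb'; rewrite wdot_chi // orth.
  - move=> f; have [a expand] := span f; exists a => z wz0.
    by apply: expand; rewrite inE pos_w.
have cardB_neq0 : #|B|%:R != 0 :> C.
  have [a expand] := span (fun=> 1).
  rewrite pnatr_eq0 -lt0n card_gt0; apply: contra_neq (oner_neq0 C) => B0.
  rewrite -[LHS]/((fun=> 1 : C) y) (expand y) ?inE ?pos_w // B0.
  by rewrite big1 // => b; rewrite in_set0.
exists (w y); split; first by rewrite pos_w.
move=> x; rewrite hE inE pos_w.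
have [->|wx0] := eqVneq (w x) 0; first by rewrite mulr0.
by rewrite mulr1; apply: (mulIf cardB_neq0); rewrite !weightB.
Qed.
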